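(* Let $n\ge1$, let $v=(v_1,\ldots,v_n)\in\mathbb{R}^n$ and $\lambda=(\lambda_1,\ldots,\lambda_n)\in\mathbb{R}^n$ satisfy $\lambda(v):=\sum_{i=1}^n\lambda_iv_i>0$, and put $\|\lambda\|_\infty=\max_i|\lambda_i|$, $\|v\|_\infty=\max_i|v_i|$. Let $H\subseteq Q_n$ be any set of more than $2^{n-1}$ vertices. Then there exists $\beta\in H$ such that \[ \sqrt{\lambda(v)}\ \le\ \|\lambda\|_\infty\cdot\#\{\gamma\in H:\gamma\to\beta\}+\|v\|_\infty\cdot\#\{\gamma\in H:\beta\to\gamma\}. \]
   Context: $Q_n=\{0,1\}^n$ is the boolean cube, viewed as a graph in which two vertices are adjacent iff they differ in exactly one coordinate. For $\gamma,\beta\in Q_n$ write $\gamma\to\beta$ if $\gamma$ and $\beta$ differ in exactly one coordinate $k$ and $\gamma_k=0$, $\beta_k=1$ (i.e. $\beta$ is obtained from $\gamma$ by changing a single $0$ to $1$). *)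

From HB Require Import structures.
From mathcomp Require Import all_boot all_order all_algebra.
Set Implicit Arguments. Unset Strict Implicit. Unset Printing Implicit Defensive.
Import Order.TTheory GRing.Theory Num.Theory.

(* Vertices of the boolean cube Q_n = {0,1}^n (false = 0, true = 1). *)
Definition cube (n : nat) := {ffun 'I_n -> bool}.

Definition arrow (n : nat) (gamma beta : cube n) : bool :=
  [exists k : 'I_n, [&& gamma k == false, beta k == true &
     [forall j : 'I_n, (j != k) ==> (gamma j == beta j)]]].

Local Open Scope ring_scope.

(* sup norm: max_i |x_i| (0 for n = 0, norms are nonnegative). *)
Definition linf (R : numDomainType) (n : nat) (x : 'I_n -> R) : R :=
  \big[Num.max/0]_(i < n) `|x i|.

Definition pairing (R : numDomainType) (n : nat) (lam v : 'I_n -> R) : R :=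
  \sum_(i < n) lam i * v i.

(* On the cube Q_n we build a signed, weighted adjacency matrix A: the entry
   A(g, flip g k) is sgn(g,k) * lam_k (if g_k = 0) or sgn(g,k) * v_k (if
   g_k = 1), where sgn(g,k) = (-1)^(number of ones of g above k), and all
   other entries vanish.  The signs make distinct two-step paths cancel, so
   A^2 = lambda(v) * I.  Consequently the eigenspaces of A for +s and -s,
   s = sqrt(lambda(v)), have dimensions summing to at least 2^n, so one of
   them has dimension >= 2^(n-1) and meets the space of vectors vanishing
   off H (of codimension < 2^(n-1)).  At a coordinate beta of maximal
   modulus of such an eigenvector x we get
     s |x_beta| <= sum_(gamma in H) |A(gamma, beta)| |x_gamma|,
   and |A(gamma, beta)| is at most ||lam|| (gamma -> beta) or ||v||
   (beta -> gamma). *)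

From HB Require Import structures.
From mathcomp Require Import all_boot all_order all_algebra.
From mathcomp Require Import ring zify.
Import Order.TTheory GRing.Theory Num.Theory.
Set Implicit Arguments. Unset Strict Implicit.
Local Open Scope ring_scope.

Lemma antisymmetric_sum_eq0 (R : numDomainType) (I : finType)
    (F : I -> I -> R) :
  (forall i j, i != j -> F i j + F j i = 0) ->
  \sum_i \sum_(j | j != i) F i j = 0.
Proof.
move=> Fanti; set S := (X in X = 0).
have swap : S = \sum_i \sum_(j | j != i) F j i.
  rewrite /S (exchange_big_dep xpredT) //=.
  by apply: eq_bigr => i _; apply: eq_bigl => j; rewrite eq_sym.
have : S *+ 2 = 0.
  rewrite mulr2n {2}swap -big_split big1 // => i _.
  by rewrite -big_split big1 // => j ji; apply: Fanti; rewrite eq_sym.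
by move/eqP; rewrite mulrn_eq0 => /eqP.
Qed.

(* If B^2 = s^2, then (B + s)(B - s) = 0, so the kernels of B - s and
   B + s together have dimension >= N; one of them has at least N/2. *)
Lemma kernels_of_square_root (F : fieldType) N (B : 'M[F]_N) s :
  B *m B = (s * s)%:M ->
  exists2 t, t = s \/ t = - s & (N <= 2 * \rank (kermx (B - t%:M)))%N.
Proof.
move=> BB.
have prod0 : (B + s%:M) *m (B - s%:M) = 0.
  by rewrite mulmxDl !mulmxBr BB mul_mx_scalar mul_scalar_mx -scalar_mxM
             addrA subrK subrr.
have rank_le : (\rank (B + s%:M)%R <= \rank (kermx (B - s%:M)))%N.
  by apply: mxrankS; apply/sub_kermxP.
have kerN : \rank (kermx (B - (- s)%:M)) = (N - \rank (B + s%:M)%R)%N.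
  by rewrite raddfN /= opprK mxrank_ker.
have := rank_leq_col (B + s%:M).
case: (leqP N (2 * \rank (kermx (B - s%:M)))) => [le|lt] rank_leN.
  by exists s; [left|].
by exists (- s); [right|rewrite kerN; lia].
Qed.

(* A subspace of dimension larger than #|Z| contains a nonzero vector
   vanishing on the coordinates in Z: intersect with the kernel of the
   projection onto those coordinates. *)
Lemma vanishing_vector_in_subspace (F : fieldType) m N (K : 'M[F]_(m, N))
    (Z : {set 'I_N}) :
  (#|Z| < \rank K)%N ->
  exists x : 'rV_N, [/\ (x <= K)%MS, x != 0 & forall i, i \in Z -> x 0 i = 0].
Proof.
move=> Zsmall.
pose Sel : 'M[F]_(N, #|Z|) := \matrix_(i, j) (i == enum_val j)%:R.
have Sel_coord (x : 'rV_N) j : (x *m Sel) 0 j = x 0 (enum_val j).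
  rewrite !mxE (bigD1 (enum_val j)) //= mxE eqxx mulr1 big1 ?addr0 //.
  by move=> i /negbTE ij; rewrite mxE ij mulr0.
have ker_large : (N <= \rank (kermx Sel) + #|Z|)%N.
  by have := rank_leq_col Sel; rewrite mxrank_ker; lia.
have cap_ne0 : (K :&: kermx Sel)%MS != 0.
  rewrite -mxrank_eq0; have := mxrank_sum_cap K (kermx Sel).
  by have := rank_leq_col (K + kermx Sel)%MS; lia.
case/rowV0Pn: cap_ne0 => x; rewrite sub_capmx => /andP [xK /sub_kermxP xSel] x0.
exists x; split=> // i iZ; rewrite -(enum_rankK_in iZ iZ) -Sel_coord xSel.
by rewrite mxE.
Qed.

Lemma vanishing_eigenvector (F : fieldType) N (B : 'M[F]_N) s (Z : {set 'I_N}) :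
  B *m B = (s * s)%:M -> (2 * #|Z| < N)%N ->
  exists t, exists x : 'rV_N,
    [/\ t = s \/ t = - s, x != 0, x *m B = t *: x
      & forall i, i \in Z -> x 0 i = 0].
Proof.
move=> BB Zsmall; have [t t_pm ker_large] := kernels_of_square_root BB.
have [|x [xK x0 xZ]] :=
  @vanishing_vector_in_subspace _ _ _ (kermx (B - t%:M)) Z; first by lia.
exists t, x; split=> //; apply/eqP; rewrite -subr_eq0 -mul_mx_scalar -mulmxBr.
exact/eqP/sub_kermxP.
Qed.

(* Looking at a coordinate i of maximal modulus of an eigenvector x,
   |t| is bounded by the i-th column sum of |B| over the support of x. *)
Lemma eigenvector_max_coordinate (R : realDomainType) N (B : 'M[R]_N)
    (x : 'rV_N) t :
  x != 0 -> x *m B = t *: x ->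
  exists2 i, x 0 i != 0 & `|t| <= \sum_(j | x 0 j != 0) `|B j i|.
Proof.
move=> x0 xB.
have [i0 xi0] : exists i, x 0 i != 0.
  apply/existsP; apply: contraR x0; rewrite negb_exists => /forallP x0.
  by apply/eqP/rowP => i; rewrite mxE; apply/eqP/negbNE.
pose f i := `|x 0 i|.
have [i _ imax] := @arg_maxP _ R _ i0 xpredT f isT.
have fi_gt0 : 0 < f i by apply: lt_le_trans (imax i0 isT); rewrite normr_gt0.
exists i; first by rewrite -normr_gt0.
rewrite -(ler_pM2r fi_gt0) /f -normrM.
have -> : t * x 0 i = \sum_j x 0 j * B j i.
  by move/matrixP: xB => /(_ 0 i); rewrite !mxE => <-.
apply: le_trans (ler_norm_sum _ _ _) _.
rewrite mulr_suml [X in X <= _](bigID (fun j => x 0 j != 0)) /=.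
rewrite [X in _ + X]big1 ?addr0 => [|j /negbNE/eqP ->]; last first.
  by rewrite mul0r normr0.
apply: ler_sum => j _; rewrite normrM mulrC ler_wpM2l //.
exact: imax.
Qed.

Definition flip n (g : cube n) (k : 'I_n) : cube n :=
  [ffun j => if j == k then ~~ g j else g j].

Lemma flipK n (g : cube n) k : flip (flip g k) k = g.
Proof. by apply/ffunP=> j; rewrite !ffunE; case: eqP => // ->; rewrite negbK. Qed.

Lemma flipC n (g : cube n) k l : flip (flip g k) l = flip (flip g l) k.
Proof. by apply/ffunP=> j; rewrite !ffunE; case: (j =P l); case: (j =P k). Qed.

Lemma flip_inj n (g : cube n) k l : flip g k = flip g l -> k = l.
Proof.
move=> /ffunP /(_ k); rewrite !ffunE eqxx; case: (k =P l) => // _.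
by case: (g k).
Qed.

Lemma arrow_flip n (g : cube n) k : ~~ g k -> arrow g (flip g k).
Proof.
move=> gk; apply/existsP; exists k; rewrite ffunE eqxx (negbTE gk) /=.
by apply/forallP => j; apply/implyP => /negbTE jk; rewrite ffunE jk.
Qed.

Section SignedAdjacency.
Variable R : comNzRingType.

Definition sgn n (g : cube n) (k : 'I_n) : R :=
  \prod_(j < n | (k < j)%N) (if g j then -1 else 1).

Lemma sgn_flip_le n (g : cube n) (k l : 'I_n) : (l <= k)%N ->
  sgn (flip g l) k = sgn g k.
Proof.
move=> lk; apply: eq_bigr => j kj; rewrite ffunE.
by case: (j =P l) => // jl; move: kj; rewrite jl ltnNge lk.
Qed.

Lemma sgn_flip_gt n (g : cube n) (k l : 'I_n) : (k < l)%N ->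
  sgn (flip g l) k = - sgn g k.
Proof.
move=> kl; rewrite /sgn (bigD1 l) //= [in RHS](bigD1 l) //= ffunE eqxx -mulNr.
congr (_ * _); first by case: (g l); rewrite ?opprK.
by apply: eq_bigr => j /andP [_ /negbTE jl]; rewrite ffunE jl.
Qed.

Lemma sgn_sq n (g : cube n) k : sgn g k * sgn g k = 1.
Proof.
rewrite -big_split big1 //= => j _.
by case: (g j); rewrite ?mulrNN mulr1.
Qed.

Variables (n : nat) (lam v : 'I_n -> R).

Definition weight (g : cube n) (k : 'I_n) : R :=
  sgn g k * (if g k then v k else lam k).

Lemma weight_flip_back g k : weight g k * weight (flip g k) k = lam k * v k.
Proof.
rewrite /weight sgn_flip_le // ffunE eqxx mulrACA sgn_sq mul1r.
by case: (g k) => //=; rewrite mulrC.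
Qed.

(* The two paths g -> flip g k -> flip (flip g k) l and the one through
   flip g l carry opposite weights: this is the role of the signs. *)
Lemma weight_anticommute g (k l : 'I_n) : k != l ->
  weight g k * weight (flip g k) l + weight g l * weight (flip g l) k = 0.
Proof.
wlog kl : k l / (k < l)%N.
  move=> W kl; case: (ltngtP k l) => [/W->//|lk|/val_inj klE].
    by rewrite addrC W // eq_sym.
  by rewrite klE eqxx in kl.
move=> nkl; rewrite /weight sgn_flip_le ?(ltnW kl) // sgn_flip_gt //.
by rewrite !ffunE (negbTE nkl) eq_sym (negbTE nkl); ring.
Qed.

Definition adj (g b : cube n) : R :=
  \sum_(k < n) (b == flip g k)%:R * weight g k.

Lemma adj_flip g k : adj g (flip g k) = weight g k.
Proof.
rewrite /adj (bigD1 k) //= eqxx mul1r big1 ?addr0 // => l lk.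
by case: eqP => [/flip_inj lkE|]; [rewrite lkE eqxx in lk | rewrite mul0r].
Qed.

Lemma adj_nonflip g b : (forall k, b != flip g k) -> adj g b = 0.
Proof. by move=> nb; rewrite /adj big1 // => k _; rewrite (negbTE (nb k)) mul0r. Qed.

Lemma adj_apply g (F : cube n -> R) :
  \sum_b adj g b * F b = \sum_k weight g k * F (flip g k).
Proof.
under eq_bigr do rewrite /adj mulr_suml.
rewrite exchange_big /=; apply: eq_bigr => k _.
rewrite (bigD1 (flip g k)) //= eqxx mul1r big1 ?addr0 // => b /negbTE ->.
by rewrite !mul0r.
Qed.
End SignedAdjacency.

Lemma adj_sq (R : numDomainType) n (lam v : 'I_n -> R) g d :
  \sum_b adj lam v g b * adj lam v b d = (g == d)%:R * pairing lam v.
Proof.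
rewrite adj_apply.
under eq_bigr => k _ do rewrite /adj mulr_sumr (bigD1 k) //= flipK mulrCA.
rewrite big_split /= antisymmetric_sum_eq0 ?addr0 => [|k l kl].
  rewrite /pairing mulr_sumr; apply: eq_bigr => k _.
  by rewrite weight_flip_back eq_sym.
rewrite mulrCA [in X in _ + X]mulrCA flipC -mulrDr.
by rewrite weight_anticommute ?mulr0.
Qed.

Lemma linf_ge0 (R : realDomainType) n (x : 'I_n -> R) : 0 <= linf x.
Proof. by rewrite /linf; elim/big_ind: _ => //= a b a0 b0; rewrite le_max a0. Qed.

Lemma linf_ge (R : realDomainType) n (x : 'I_n -> R) i : `|x i| <= linf x.
Proof. by rewrite /linf (bigD1 i) //= le_max lexx. Qed.

Lemma norm_sgn (R : realDomainType) n (g : cube n) k : `|sgn R g k| = 1.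
Proof.
rewrite /sgn; elim/big_ind: _ => [|a b na nb|j _]; first exact: normr1.
  by rewrite normrM na nb mulr1.
by case: (g j); rewrite ?normrN normr1.
Qed.

Lemma adj_bound (R : realDomainType) n (lam v : 'I_n -> R) g b :
  `|adj lam v g b| <= linf lam * (arrow g b)%:R + linf v * (arrow b g)%:R.
Proof.
have bound_ge0 : 0 <= linf lam * (arrow g b)%:R + linf v * (arrow b g)%:R.
  by rewrite addr_ge0 // mulr_ge0 ?linf_ge0.
have [/existsP [k /eqP ->]|nb] := boolP [exists k, b == flip g k]; last first.
  rewrite adj_nonflip ?normr0 // => k; apply: contra nb => bk.
  by apply/existsP; exists k.
rewrite adj_flip /weight normrM norm_sgn mul1r; case gk: (g k).
  have -> : arrow (flip g k) g.
    by rewrite -{2}(flipK g k) arrow_flip // ffunE eqxx gk.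
  by rewrite mulr1 (le_trans (linf_ge v k)) // lerDr mulr_ge0 ?linf_ge0.
rewrite arrow_flip ?gk // mulr1.
by rewrite (le_trans (linf_ge lam k)) // lerDl mulr_ge0 ?linf_ge0.
Qed.

Definition adjmx (R : comNzRingType) n (lam v : 'I_n -> R) :
  'M[R]_#|{: cube n}| :=
  \matrix_(i, j) adj lam v (enum_val i) (enum_val j).

Lemma sum_over_cube (R : comNzRingType) n (P : pred (cube n))
    (F : cube n -> R) :
  \sum_(g | P g) F g = \sum_(i < #|{: cube n}| | P (enum_val i)) F (enum_val i).
Proof. exact: reindex (onW_bij _ (enum_val_bij _)). Qed.

Lemma adjmx_sq (R : numDomainType) n (lam v : 'I_n -> R) :
  adjmx lam v *m adjmx lam v = (pairing lam v)%:M.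
Proof.
apply/matrixP => i j; rewrite !mxE.
under eq_bigr do rewrite !mxE.
rewrite -(sum_over_cube xpredT
            (fun b => adj lam v (enum_val i) b * adj lam v b (enum_val j))).
by rewrite adj_sq (inj_eq enum_val_inj) mulr_natl.
Qed.

Lemma sum_indicator (R : comNzRingType) (T : finType) (A : {set T})
    (P : pred T) :
  \sum_(g in A) (P g)%:R = #|[set g in A | P g]|%:R :> R.
Proof.
rewrite -sum1_card natr_sum big_mkcond [RHS]big_mkcond /=.
by apply: eq_bigr => g _; rewrite inE; case: (g \in A); case: (P g).
Qed.

Lemma adjmx_column_bound (R : realDomainType) n (lam v : 'I_n -> R)
    (H : {set cube n}) (P : pred 'I_#|{: cube n}|) i :
  (forall j, P j -> enum_val j \in H) ->
  \sum_(j | P j) `|adjmx lam v j i| <=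
    linf lam * #|[set g in H | arrow g (enum_val i)]|%:R
    + linf v * #|[set g in H | arrow (enum_val i) g]|%:R.
Proof.
move=> PH; set beta := enum_val i.
apply: (@le_trans _ _
  (\sum_(j | enum_val j \in H) `|adj lam v (enum_val j) beta|)).
  rewrite [X in _ <= X]big_mkcond [X in X <= _]big_mkcond /=.
  apply: ler_sum => j _; rewrite mxE.
  by case Pj: (P j); [rewrite PH | case: ifP].
rewrite -(sum_over_cube (mem H) (fun g => `|adj lam v g beta|)).
apply: le_trans (ler_sum _ (fun g _ => adj_bound lam v g beta)) _.
by rewrite big_split /= -!mulr_sumr !sum_indicator.
Qed.

Lemma complement_small n (H : {set cube n}) :
  (0 < n)%N -> (2 ^ n.-1 < #|H|)%N -> (2 * #|~: H| < #|{: cube n}|)%N.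
Proof.
move=> n_gt0 Hlarge.
have card_cube : #|{: cube n}| = (2 * 2 ^ n.-1)%N.
  by rewrite card_ffun card_bool card_ord -expnS prednK.
by have := cardsC H; rewrite card_cube; lia.
Qed.

Theorem mainTheorem2 (R : rcfType) (n : nat) (hn : (0 < n)%N)
  (v lam : 'I_n -> R) (hpos : 0 < pairing lam v)
  (H : {set cube n}) (hH : (2 ^ n.-1 < #|H|)%N) :
  exists2 beta, beta \in H &
    Num.sqrt (pairing lam v) <=
      linf lam * (#|[set gamma in H | arrow gamma beta]|)%:R
      + linf v * (#|[set gamma in H | arrow beta gamma]|)%:R.
Proof.
set s := Num.sqrt (pairing lam v).
have s_sq : adjmx lam v *m adjmx lam v = (s * s)%:M.
  by rewrite adjmx_sq -expr2 sqr_sqrtr // ltW.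
pose Z := @enum_val _ {: cube n} @^-1: ~: H.
have Zsmall : (2 * #|Z| < #|{: cube n}|)%N.
  rewrite on_card_preimset ?complement_small //.
  by apply: onW_bij; apply: enum_val_bij.
have [t [x [t_pm x0 xB xZ]]] := vanishing_eigenvector s_sq Zsmall.
have inH j : x 0 j != 0 -> enum_val j \in H.
  by apply: contraR => jH; rewrite xZ // !inE.
have [i xi t_le] := eigenvector_max_coordinate x0 xB.
exists (enum_val i); first exact: inH.
have -> : s = `|t| by case: t_pm => ->; rewrite ?normrN ger0_norm ?sqrtr_ge0.
by apply: le_trans t_le _; apply: adjmx_column_bound.
Qed.
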